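(* Let $n\ge1$, let $y,z\in C(SU(n+1))$ be given by $y(A)=a_{n+1,1}$ and $z(A)=\overline{a_{n+1,n+1}}$, where $a_{ij}$ denotes the $(i,j)$-entry of $A\in SU(n+1)$, and for $\gamma=(\gamma_1,\gamma_2)\in\mathbb{N}^2$ (with $0\in\mathbb{N}$) let $b^{\gamma}=y^{\gamma_1}z^{\gamma_2}$. Let $\epsilon_1=(1,0)$, $\epsilon_2=(0,1)$ and let $\|\cdot\|$ be the supremum norm. Then (1) $\sup_{\{\gamma:\gamma_1=\gamma_2\}}\|b^\gamma\|/\|b^{\gamma+\epsilon_1+\epsilon_2}\|<\infty$; (2) $\sup_{\{\gamma:\gamma_1\ge\gamma_2\}}\|b^\gamma\|/\|b^{\gamma+\epsilon_1}\|<\infty$; (3) $\sup_{\{\gamma:\gamma_1\le\gamma_2\}}\|b^\gamma\|/\|b^{\gamma+\epsilon_2}\|<\infty$. *)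

From HB Require Import structures.
From mathcomp Require Import all_boot all_order all_algebra.
From mathcomp Require Import complex.
From mathcomp Require Import boolp classical_sets reals.

Set Implicit Arguments. Unset Strict Implicit. Unset Printing Implicit Defensive.
Import Order.TTheory GRing.Theory Num.Theory.
Local Open Scope ring_scope.
Local Open Scope classical_set_scope.

Definition SU (R : realType) (m : nat) : set 'M[R[i]]_m :=
  [set A | A *m (map_mx (@conjc R) A)^T = 1%:M /\ \det A = 1].

Definition supnorm (R : realType) (m : nat) (f : 'M[R[i]]_m -> R[i]) : R :=
  sup [set @Normc.normc R (f A) | A in @SU R m].

Definition yfun (R : realType) (n : nat) (A : 'M[R[i]]_n.+1) : R[i] :=
  A ord_max ord0.
Definition zfun (R : realType) (n : nat) (A : 'M[R[i]]_n.+1) : R[i] :=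
  conjc (A ord_max ord_max).

Definition bgam (R : realType) (n : nat) (g : nat * nat) (A : 'M[R[i]]_n.+1)
  : R[i] := yfun A ^+ g.1 * zfun A ^+ g.2.

(* For A in SU(n+1) the last row is a unit vector, so s = |y(A)| and t = |z(A)|
   satisfy s^2 + t^2 <= 1; conversely each point (p, q) of the unit circle with
   p, q >= 0 is attained, with y = p and z = q, by a real rotation in the plane of
   the first and last coordinates.  Hence ||b^(a,b)|| is the supremum of s^a t^b
   over the quarter disk, and a ratio bound follows once every value s^a t^b is
   at most 2 p^a' q^b' for some (p, q) on the circle.  For a' = a + 1 with b <= a
   take the radial projection of (s, t), after swapping s and t if s < t, so that
   p >= 1/sqrt 2; on the diagonal take p = q = 1/sqrt 2 and use st <= 1/2. *)

From HB Require Import structures.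
From mathcomp Require Import all_boot all_order all_algebra.
From mathcomp Require Import complex.
From mathcomp Require Import boolp classical_sets reals.
From mathcomp Require Import ring lra.
Set Implicit Arguments. Unset Strict Implicit. Unset Printing Implicit Defensive.
Import Order.TTheory GRing.Theory Num.Theory.
Local Open Scope ring_scope.
Local Open Scope classical_set_scope.
Local Open Scope complex_scope.
Import Normc.

Lemma expr_swap_le (R : realDomainType) (a b : nat) (s t : R) :
  (b <= a)%N -> 0 <= s -> s <= t -> s ^+ a * t ^+ b <= t ^+ a * s ^+ b.
Proof.
move=> le_ba s_ge0 le_st; have t_ge0 : 0 <= t := le_trans s_ge0 le_st.
rewrite -(subnK le_ba) !exprD -!mulrA [t ^+ b * _]mulrC.
by rewrite ler_wpM2r ?mulr_ge0 ?exprn_ge0 // lerXn2r // nnegrE.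
Qed.

Section QuarterDisk.
Variable R : rcfType.
Implicit Types s t p q c : R.

Definition circle_dominated c (g g' : nat * nat) :=
  forall s t, 0 <= s -> 0 <= t -> s ^+ 2 + t ^+ 2 <= 1 ->
  exists p q, [/\ 0 <= p, 0 <= q, p ^+ 2 + q ^+ 2 = 1 &
                  s ^+ g.1 * t ^+ g.2 <= c * (p ^+ g'.1 * q ^+ g'.2)].

Lemma quarter_disk_monomial_le1 s t a b :
  0 <= s -> 0 <= t -> s ^+ 2 + t ^+ 2 <= 1 -> s ^+ a * t ^+ b <= 1.
Proof.
move=> s_ge0 t_ge0 st_le1.
by rewrite mulr_ile1 ?exprn_ge0 ?exprn_ile1 //; nra.
Qed.

Lemma circle_dominated_swap c a b a' b' :
  circle_dominated c (a, b) (a', b') -> circle_dominated c (b, a) (b', a').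
Proof.
move=> dom s t s_ge0 t_ge0 st_le1; have ts_le1 : t ^+ 2 + s ^+ 2 <= 1 by rewrite addrC.
have [p [q [p_ge0 q_ge0 pq1 le_st]]] := dom t s t_ge0 s_ge0 ts_le1.
exists q, p; split => //; first by rewrite addrC.
by rewrite mulrC [q ^+ _ * _]mulrC.
Qed.

Lemma quarter_disk_le_circle s t :
  0 <= t -> t <= s -> s ^+ 2 + t ^+ 2 <= 1 ->
  exists p q, [/\ 0 <= q, q <= p, p ^+ 2 + q ^+ 2 = 1, s <= p & t <= q].
Proof.
move=> t_ge0 le_ts st_le1; have [s0|s_gt0] := eqVneq s 0.
  have t0 : t = 0 by apply/eqP; rewrite eq_le t_ge0 -s0 le_ts.
  by exists 1, 0; rewrite s0 t0 expr1n expr0n addr0 ler01.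
have {}s_gt0 : 0 < s by rewrite lt_def s_gt0 (le_trans t_ge0).
set r := Num.sqrt (s ^+ 2 + t ^+ 2).
have r_gt0 : 0 < r by rewrite sqrtr_gt0; nra.
have r_le1 : r <= 1 by rewrite -sqrtr1 ler_sqrt //; nra.
have r2 : r ^+ 2 = s ^+ 2 + t ^+ 2 by rewrite sqr_sqrtr //; nra.
exists (s / r), (t / r); split.
- by rewrite divr_ge0 // ltW.
- by rewrite ler_pM2r ?invr_gt0.
- by rewrite !expr_div_n -mulrDl -r2 divff // expf_neq0 // gt_eqF.
- by rewrite ler_pdivlMr //; nra.
- by rewrite ler_pdivlMr //; nra.
Qed.

Lemma circle_major_ge_half p q :
  0 <= q -> q <= p -> p ^+ 2 + q ^+ 2 = 1 -> 1 <= 2 * p.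
Proof. by move=> q_ge0 le_qp pq1; nra. Qed.

Lemma circle_dominated_succl a b : (b <= a)%N -> circle_dominated 2 (a, b) (a.+1, b).
Proof.
move=> le_ba s t s_ge0 t_ge0 st_le1.
wlog le_ts : s t s_ge0 t_ge0 st_le1 / t <= s.
  move=> hwlog; have [le_ts|lt_st] := leP t s; first exact: hwlog.
  have ts_le1 : t ^+ 2 + s ^+ 2 <= 1 by rewrite addrC.
  have [p [q [p_ge0 q_ge0 pq1 le_ts]]] := hwlog t s t_ge0 s_ge0 ts_le1 (ltW lt_st).
  exists p, q; split => //; apply: le_trans le_ts.
  exact: expr_swap_le le_ba s_ge0 (ltW lt_st).
have [p [q [q_ge0 le_qp pq1 le_sp le_tq]]] := quarter_disk_le_circle t_ge0 le_ts st_le1.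
have p_ge0 := le_trans q_ge0 le_qp.
exists p, q; split => //=.
apply: (@le_trans _ _ (p ^+ a * q ^+ b)).
  by rewrite ler_pM ?exprn_ge0 // lerXn2r // nnegrE.
rewrite exprS -mulrA mulrA ler_peMl ?mulr_ge0 ?exprn_ge0 //.
exact: circle_major_ge_half q_ge0 le_qp pq1.
Qed.

Lemma circle_dominated_diag a : circle_dominated 2 (a, a) (a.+1, a.+1).
Proof.
move=> s t s_ge0 t_ge0 st_le1; set p := Num.sqrt (2^-1 : R).
have p2 : p ^+ 2 = 2^-1 by rewrite sqr_sqrtr // invr_ge0.
exists p, p; split; rewrite ?sqrtr_ge0 //=; first by rewrite p2; field.
rewrite -!exprMn -expr2 p2 exprS mulrA mulfV ?pnatr_eq0 // mul1r.
rewrite lerXn2r // ?nnegrE ?mulr_ge0 ?invr_ge0 //.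
rewrite -[2^-1 : R]mul1r ler_pdivlMr //.
by have := sqr_ge0 (s - t); rewrite sqrrB; lra.
Qed.

End QuarterDisk.

Section Givens.
Variables (R : comPzRingType) (k : nat) (u v : 'I_k).
Hypothesis neq_uv : u != v.
Implicit Types c s : R.

Definition givens_mx c s : 'M[R]_k := \matrix_(i, j)
  if i == u then (if j == u then c else if j == v then - s else 0)
  else if i == v then (if j == u then s else if j == v then c else 0)
  else (i == j)%:R.

Lemma givens_mx_out c s i j : j != u -> j != v -> givens_mx c s i j = (i == j)%:R.
Proof.
move=> ju jv; rewrite mxE (negbTE ju) (negbTE jv).
have [->|_] := eqVneq i u; first by rewrite eq_sym (negbTE ju).
by have [->|_] := eqVneq i v; first by rewrite eq_sym (negbTE jv).
Qed.

Lemma givens_mx_sum_out c s i j :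
  \sum_(l | (l != u) && (l != v)) givens_mx c s i l * givens_mx c s j l =
  [&& i == j, i != u & i != v]%:R.
Proof.
under eq_bigr => l /andP[lu lv] do rewrite !givens_mx_out //.
have [iuv|iuv] := boolP ((i != u) && (i != v)); last first.
  rewrite andbF big1 // => l /andP[lu lv].
  case: (eqVneq i l) => [il|_]; last by rewrite mul0r.
  by rewrite il lu lv in iuv.
rewrite andbT (bigD1 i) //= eqxx mul1r big1 ?addr0 => [|l /andP[_ li]].
  by rewrite eq_sym.
by rewrite eq_sym (negbTE li) mul0r.
Qed.

Lemma givens_mx_orthogonal c s : c ^+ 2 + s ^+ 2 = 1 ->
  givens_mx c s *m (givens_mx c s)^T = 1%:M.
Proof.
move=> cs1; apply/matrixP => i j; rewrite mxE [RHS]mxE.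
under eq_bigr do rewrite [_^T _ _]mxE.
rewrite (bigD1 u) // (bigD1 v) /=; last by rewrite eq_sym.
rewrite givens_mx_sum_out !mxE (eq_sym v u) (negbTE neq_uv) !eqxx.
have [->|iu] := eqVneq i u; [|have [->|iv] := eqVneq i v].
all: have [jEu|ju] := eqVneq j u; [subst j|have [jEv|jv] := eqVneq j v; [subst j|]].
all: rewrite ?eqxx ?(eq_sym v u) ?(negbTE neq_uv) ?(negbTE iu) ?(negbTE iv)
               ?(negbTE ju) ?(negbTE jv) /=.
all: first [by rewrite andbT !mul0r !add0r | by rewrite -cs1; ring | ring].
Qed.

(* Orthogonality gives [(det G)^2 = 1] for [G := givens_mx c s], so rescaling
   row [u] of [G] by [det G] yields determinant 1 without computing [det G]. *)
Definition special_givens_mx c s : 'M[R]_k :=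
  diag_mx (\row_i (if i == u then \det (givens_mx c s) else 1)) *m givens_mx c s.

Lemma det_givens_mx_sqr c s : c ^+ 2 + s ^+ 2 = 1 ->
  \det (givens_mx c s) * \det (givens_mx c s) = 1.
Proof.
move=> cs1; have := congr1 determinant (givens_mx_orthogonal cs1).
by rewrite det_mulmx det_tr det1.
Qed.

Lemma special_givens_mx_orthogonal c s : c ^+ 2 + s ^+ 2 = 1 ->
  special_givens_mx c s *m (special_givens_mx c s)^T = 1%:M.
Proof.
move=> cs1; rewrite trmx_mul tr_diag_mx mulmxA -(mulmxA _ (givens_mx c s)).
rewrite givens_mx_orthogonal // mulmx1 mul_diag_mx; apply/matrixP => i j.
rewrite !mxE; case: (i == j); rewrite ?mulr0n ?mulr0 // !mulr1n.
by case: (i == u); rewrite ?det_givens_mx_sqr ?mulr1.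
Qed.

Lemma det_special_givens_mx c s : c ^+ 2 + s ^+ 2 = 1 ->
  \det (special_givens_mx c s) = 1.
Proof.
move=> cs1; rewrite det_mulmx det_diag (bigD1 u) //= big1 ?mulr1 => [|i iu].
  by rewrite !mxE eqxx det_givens_mx_sqr.
by rewrite !mxE (negbTE iu).
Qed.

Lemma special_givens_mx_vu c s : special_givens_mx c s v u = s.
Proof.
by rewrite /special_givens_mx mul_diag_mx !mxE eq_sym (negbTE neq_uv) !eqxx mul1r.
Qed.

Lemma special_givens_mx_vv c s : special_givens_mx c s v v = c.
Proof.
by rewrite /special_givens_mx mul_diag_mx !mxE eq_sym (negbTE neq_uv) !eqxx mul1r.
Qed.

End Givens.

Lemma sup_div_le (R : realType) (S T : set R) (c : R) :
  S !=set0 -> has_ubound T -> (forall y, T y -> 0 <= y) -> 0 <= c ->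
  (forall x, S x -> exists2 y, T y & x <= c * y) -> sup S / sup T <= c.
Proof.
move=> [x0 Sx0] ubT T_ge0 c_ge0 ST; have [y0 Ty0 _] := ST x0 Sx0.
have supT : has_sup T by split; first by exists y0.
have supT_ge0 : 0 <= sup T := le_trans (T_ge0 _ Ty0) (sup_upper_bound supT Ty0).
have le_supS : sup S <= c * sup T.
  apply: ge_sup => [|x /ST [y Ty le_xy]]; first by exists x0.
  by apply: le_trans le_xy _; rewrite ler_wpM2l // sup_upper_bound.
have [->|supT_neq0] := eqVneq (sup T) 0; first by rewrite invr0 mulr0.
by rewrite ler_pdivrMr // lt_def supT_neq0.
Qed.

Section SpecialUnitary.
Variable R : realType.
Implicit Types x : R[i].

Lemma normc_ge0 x : 0 <= normc x.
Proof. by case: x => a b; rewrite sqrtr_ge0. Qed.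

Lemma normc_real (a : R) : 0 <= a -> normc a%:C = a.
Proof. by move=> a_ge0 /=; rewrite expr0n /= addr0 sqrtr_sqr ger0_norm. Qed.

Lemma normc_conj x : normc x^*%C = normc x.
Proof. by case: x => a b /=; rewrite sqrrN. Qed.

Lemma normcX x k : normc (x ^+ k) = normc x ^+ k.
Proof. by elim: k => [|k IHk]; rewrite ?normc1 // !exprS normcM IHk. Qed.

Lemma normc_sqr x : (normc x ^+ 2)%:C = x * x^*%C.
Proof.
case: x => a b /=; rewrite sqr_sqrtr ?addr_ge0 ?sqr_ge0 //.
by apply/eqP; rewrite eq_complex /=; apply/andP; split; apply/eqP; ring.
Qed.

Lemma SU_real_orthogonal k (M : 'M[R]_k) : M *m M^T = 1%:M -> \det M = 1 ->
  SU (map_mx (real_complex R) M).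
Proof.
move=> orthoM detM; split; last by rewrite det_map_mx detM rmorph1.
have -> : map_mx (@conjc R) (map_mx (real_complex R) M) = map_mx (real_complex R) M.
  by apply/matrixP => i j; rewrite !mxE conjc_real.
by rewrite map_trmx -map_mxM orthoM map_mx1.
Qed.

Lemma SU_row_normc_sqr_le1 k (A : 'M[R[i]]_k) i j j' : SU A -> j != j' ->
  normc (A i j) ^+ 2 + normc (A i j') ^+ 2 <= 1.
Proof.
move=> [unitA _] jj'; have := congr1 (fun B : 'M_k => B i i) unitA.
rewrite !mxE eqxx mulr1n; under eq_bigr do rewrite !mxE -normc_sqr.
rewrite -rmorph_sum => /complexI <-.
rewrite (bigD1 j) //= (bigD1 j') /=; last by rewrite eq_sym.
rewrite addrA lerDl.
by apply: sumr_ge0 => l _; rewrite exprn_ge0 ?normc_ge0.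
Qed.

End SpecialUnitary.

Section Monomials.
Variables (R : realType) (n : nat).
Hypothesis n_gt0 : (0 < n)%N.

Local Notation y_entry A := (A (@ord_max n) ord0).
Local Notation z_entry A := (A (@ord_max n) ord_max).

Lemma ord0_neq_max : (@ord0 n) != ord_max.
Proof. by rewrite -val_eqE /= eq_sym -lt0n. Qed.

Lemma normc_bgam g (A : 'M[R[i]]_n.+1) :
  normc (bgam g A) = normc (y_entry A) ^+ g.1 * normc (z_entry A) ^+ g.2.
Proof. by rewrite /bgam normcM !normcX /zfun normc_conj. Qed.

Lemma supnorm_bgam_div_le c g g' : 0 <= c -> circle_dominated c g g' ->
  supnorm (@bgam R n g) / supnorm (@bgam R n g') <= c.
Proof.
move=> c_ge0 dom; have yz_le1 (A : 'M[R[i]]_n.+1) : SU A ->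
    normc (y_entry A) ^+ 2 + normc (z_entry A) ^+ 2 <= 1.
  by move=> SU_A; apply: SU_row_normc_sqr_le1 SU_A ord0_neq_max.
apply: sup_div_le => //.
- pose I := map_mx (real_complex R) (1%:M : 'M[R]_n.+1).
  exists (normc (bgam g I)), I => //.
  by apply: SU_real_orthogonal; rewrite ?trmx1 ?mulmx1 ?det1.
- exists 1 => _ [A SU_A <-]; rewrite normc_bgam.
  exact: quarter_disk_monomial_le1 (normc_ge0 _) (normc_ge0 _) (yz_le1 A SU_A).
- by move=> _ [A _ <-]; apply: normc_ge0.
move=> _ [A SU_A <-]; rewrite normc_bgam.
have [p [q [p_ge0 q_ge0 pq1 le_c]]] := dom _ _ (normc_ge0 _) (normc_ge0 _) (yz_le1 A SU_A).
pose B := map_mx (real_complex R) (special_givens_mx (@ord0 n) ord_max q p).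
exists (normc (bgam g' B)).
  have qp1 : q ^+ 2 + p ^+ 2 = 1 by rewrite addrC.
  exists B => //; apply: SU_real_orthogonal.
    exact (special_givens_mx_orthogonal ord0_neq_max qp1).
  exact (det_special_givens_mx ord0_neq_max qp1).
rewrite normc_bgam mxE (special_givens_mx_vu ord0_neq_max) mxE.
by rewrite (special_givens_mx_vv ord0_neq_max) !normc_real.
Qed.

End Monomials.

Theorem lemma3p3 (R : realType) (n : nat) (hn : (1 <= n)%N) :
  (exists M : R, forall g : nat * nat, g.1 = g.2 ->
     supnorm (@bgam R n g) / supnorm (@bgam R n (g.1.+1, g.2.+1)) <= M) /\
  (exists M : R, forall g : nat * nat, (g.2 <= g.1)%N ->
     supnorm (@bgam R n g) / supnorm (@bgam R n (g.1.+1, g.2)) <= M) /\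
  (exists M : R, forall g : nat * nat, (g.1 <= g.2)%N ->
     supnorm (@bgam R n g) / supnorm (@bgam R n (g.1, g.2.+1)) <= M).
Proof.
split; [|split]; exists 2 => -[a b] /= hab; apply: (supnorm_bgam_div_le hn) => //.
- by rewrite hab; apply: circle_dominated_diag.
- exact: circle_dominated_succl.
- by apply: circle_dominated_swap; apply: circle_dominated_succl.
Qed.
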